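(* Let $G$ be a finite primitive permutation group on $\Omega$ of diagonal type, and let $p$ be a prime dividing $|\Omega|$. Then $G$ has a subdegree divisible by $p$.
   Context: $G$ is of diagonal type if its socle is $N=T^k$ for a nonabelian simple group $T$ and $k\ge 2$, and the stabiliser $N_\alpha$ of a point $\alpha\in\Omega$ is a full diagonal subgroup of $N$, i.e. of the form $\{(t^{\varphi_1},\dots,t^{\varphi_k}) : t\in T\}$ for some automorphisms $\varphi_i$ of $T$; then $|\Omega|=|T|^{k-1}$. A subdegree is the size of an orbit of a point stabiliser. *)

From mathcomp Require Import all_boot all_order all_fingroup all_solvable.
Set Implicit Arguments. Unset Strict Implicit. Unset Printing Implicit Defensive.
Local Open Scope group_scope.

Definition socle (gT : finGroupType) (G : {set gT}) : {set gT} :=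
  <<\bigcup_(M : {group gT} | (M \subset G) && minnormal M G) M>>.

Definition diagonal_type (Omega : finType) (G : {group {perm Omega}}) : Prop :=
  exists (k : nat) (hT : finGroupType) (T : {group hT})
         (Ts : 'I_k -> {group {perm Omega}})
         (phi : forall i : 'I_k, {morphism T >-> {perm Omega}}),
    [/\ (1 < k)%N, simple T, ~~ abelian T,
        \big[dprod/1]_(i < k) Ts i = socle G
      & forall i, isom T (Ts i) (phi i)] /\
    exists a : Omega,
      'C_(socle G)[a | 'P] = [set \prod_(i < k) phi i t | t in T].

(* The socle N = T^k is a nontrivial normal subgroup of the primitive group G,
   hence transitive, so |Omega| = |N : N_a| divides |T|^k and p divides |T|.
   In a nonabelian simple group some element x has a centraliser containing no
   Sylow p-subgroup (Jordan: the conjugates of the proper subgroup C_T(P) do not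
   cover T), so p divides |T : C_T(x)|.  Conjugating the diagonal N_a by x
   placed in one coordinate shows that the stabiliser in N_a of b = a^x is the
   diagonal copy of C_T(x); hence the N_a-orbit of b has length |T : C_T(x)|,
   and since N_a is normal in G_a this length divides that of the G_a-orbit
   of b. *)
From mathcomp Require Import all_boot all_order all_fingroup all_solvable.
Set Implicit Arguments. Unset Strict Implicit. Unset Printing Implicit Defensive.
Local Open Scope group_scope.

Lemma card_class_support_proper (gT : finGroupType) (G H : {group gT}) :
  H \proper G -> #|class_support H G| < #|G|.
Proof.
move=> pHG; have sHG := proper_sub pHG.
have H1 : (1 : gT) \in class_support H G by rewrite -(conj1g 1) memJ_class_support.
rewrite (cardsD1 1) H1 class_supportD1.
have cover_le : #|cover (H^# :^: G)| <= #|H^# :^: G| * #|H^#|.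
  rewrite -sum_nat_const; apply: leq_trans (leq_card_cover _).1 (eq_leq _).
  by apply: eq_bigr => _ /imsetP[g _ ->]; rewrite cardJg.
have nconj_le : #|H^# :^: G| <= #|G : H|.
  rewrite card_conjugates dvdn_leq ?indexg_gt0 // indexgS // subsetI sHG.
  by apply/normsP => y Hy; rewrite conjD1g (normsP (normG H)).
have cardH : #|H^#| = (#|H| - 1)%N by rewrite (cardsD1 1 H) group1 addKn.
have index_gt1 : 1 < #|G : H| by move: pHG; rewrite properE indexg_gt1 => /andP[].
have splitG : (#|G : H| * (#|H| - 1) + #|G : H| = #|G|)%N.
  by rewrite -(Lagrange sHG) -{2}(muln1 #|G : H|) -mulnDr subnK // mulnC.
rewrite add1n -splitG -addn2 leq_add // -cardH (leq_trans cover_le) //.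
exact: leq_mul.
Qed.

Lemma proper_conjugates_not_cover (gT : finGroupType) (G H : {group gT}) :
  H \proper G -> exists2 x, x \in G & forall g, g \in G -> x \notin H :^ g.
Proof.
move=> /card_class_support_proper lt_supp.
have /subsetPn[x Gx notHx] : ~~ (G \subset class_support H G).
  by apply: contraTN lt_supp => sGsupp; rewrite -leqNgt subset_leq_card.
exists x => // g Gg; apply: contra notHx; rewrite mem_conjg => Hx.
by rewrite -(conjgKV g x) memJ_class_support.
Qed.

Lemma nonabelian_simple_cent_Sylow_proper (gT : finGroupType) (T P : {group gT}) p :
  simple T -> ~~ abelian T -> prime p -> p %| #|T| -> p.-Sylow(T) P ->
  'C_T(P) \proper T.
Proof.
move=> simT nabT p_pr pT sylP; rewrite properE subsetIl /=; apply/negP => cTP.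
have sPZ : P \subset 'Z(T).
  by rewrite subsetI (pHall_sub sylP) centsC (subset_trans cTP) ?subsetIr.
have [_ /(_ _ (sub_center_normal sPZ))[P1 | PT]] := simpleP _ simT.
  have := p_part_gt1 p #|T|; rewrite -(card_Hall sylP) P1 cards1.
  by rewrite mem_primes p_pr cardG_gt0 pT.
by move: nabT; rewrite /abelian -{1}PT (subset_trans sPZ) ?subsetIr.
Qed.

(* x is taken outside every conjugate of C_T(P): were p coprime to the class
   size of x, C_T(x) would contain a Sylow p-subgroup P^g, forcing x into
   C_T(P)^g. *)
Lemma nonabelian_simple_class_dvd (gT : finGroupType) (T : {group gT}) p :
  simple T -> ~~ abelian T -> prime p -> p %| #|T| ->
  exists2 x, x \in T & p %| #|T : 'C_T[x]|.
Proof.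
move=> simT nabT p_pr pT; have [P sylP] := Sylow_exists p T.
have pCT := nonabelian_simple_cent_Sylow_proper simT nabT p_pr pT sylP.
have [x Tx notCx] := proper_conjugates_not_cover pCT.
exists x => //; apply/negPn/negP => p'x.
have [Q sylQ] := Sylow_exists p 'C_T[x].
have sylQT : p.-Sylow(T) Q.
  rewrite pHallE (subset_trans (pHall_sub sylQ)) ?subsetIl //= (card_Hall sylQ).
  rewrite -(Lagrange (subsetIl T 'C[x])) partnM ?cardG_gt0 ?indexg_gt0 //.
  by rewrite (part_p'nat (n := #|T : 'C_T[x]|)) ?muln1 // p'natE.
have [g Tg defQ] := Sylow_trans sylP sylQT.
have := notCx g Tg; rewrite conjIg (conjGid Tg) -centJ -defQ inE Tx /=.
by rewrite -sub_cent1 (subset_trans (pHall_sub sylQ)) ?subsetIr.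
Qed.

Lemma index_astab1_dvd (aT : finGroupType) (sT : finType) (to : {action aT &-> sT})
    (H K : {group aT}) (b : sT) :
  H <| K -> #|H : 'C_H[b | to]| %| #|K : 'C_K[b | to]|.
Proof.
case/andP=> sHK nHK; have nHKb := subset_trans (subsetIl K 'C[b | to]) nHK.
have -> : 'C_H[b | to] = H :&: 'C_K[b | to] by rewrite setIA (setIidPl sHK).
rewrite indexgI -indexMg -norm_joinEl //.
by rewrite indexSg ?joing_subl // join_subG subsetIl.
Qed.

Lemma normal_astab1 (aT : finGroupType) (sT : finType) (to : {action aT &-> sT})
    (N G : {group aT}) (a : sT) :
  N <| G -> 'C_N[a | to] <| 'C_G[a | to].
Proof.
move=> nNG; have -> : 'C_N[a | to] = 'C_G[a | to] :&: N.
  by rewrite setIAC (setIidPr (normal_sub nNG)).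
exact: normalGI (subsetIl _ _) nNG.
Qed.

Lemma bigdprod_prod_inj (gT : finGroupType) (I : finType) (A : I -> {set gT})
    (G : {group gT}) (e f : I -> gT) :
  \big[dprod/1]_(i : I) A i = G -> \prod_(i : I) e i = \prod_(i : I) f i ->
  (forall i, e i \in A i) -> (forall i, f i \in A i) -> e =1 f.
Proof.
move=> defG eq_ef Ae Af i.
have Ge : \prod_(i : I) e i \in G by rewrite -(bigdprodW defG) mem_prodg.
have [c [_ _ uniq_c]] := mem_bigdprod defG Ge.
by rewrite (uniq_c e (fun j _ => Ae j)) ?(uniq_c f (fun j _ => Af j)).
Qed.

Lemma bigdprod_cent (gT : finGroupType) (I : finType) (A : I -> {group gT})
    (G : {group gT}) i j :
  \big[dprod/1]_(i : I) A i = G -> i != j -> A i \subset 'C(A j).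
Proof.
move=> defG.
have /bigcprodYP cA : \big[cprod/1]_(i | predT i) A i == (\prod_(i | predT i) A i)%G.
  by rewrite (bigdprodWcp defG) bigprodGE (bigdprodWY defG).
exact: cA.
Qed.

Fact socle_group_set (gT : finGroupType) (G : {set gT}) : group_set (socle G).
Proof. exact: groupP. Qed.
Canonical socle_group (gT : finGroupType) (G : {set gT}) := Group (socle_group_set G).

Lemma socle_normal (gT : finGroupType) (G : {group gT}) : socle G <| G.
Proof.
rewrite /normal gen_subG norms_gen ?andbT; first by apply/bigcupsP => M /andP[].
by apply/norms_bigcup/bigcapsP => M /andP[_ /mingroupp /andP[]].
Qed.

Section DiagonalType.

Variables (Omega : finType) (G : {group {perm Omega}}) (k : nat).
Variables (hT : finGroupType) (T : {group hT}) (Ts : 'I_k -> {group {perm Omega}}).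
Variables (phi : forall i : 'I_k, {morphism T >-> {perm Omega}}) (a : Omega).
Hypotheses (k_gt1 : 1 < k) (defN : \big[dprod/1]_(i < k) Ts i = socle G).
Hypothesis isoT : forall i, isom T (Ts i) (phi i).
Hypothesis defD : 'C_(socle G)[a | 'P] = [set \prod_(i < k) phi i t | t in T].

Definition diag (t : hT) := \prod_(i < k) phi i t.

Lemma point_stab_diag : 'C_(socle G)[a | 'P] = diag @: T.
Proof. exact: defD. Qed.

Lemma phi_mem i t : t \in T -> phi i t \in Ts i.
Proof. by move=> Tt; rewrite -(isom_im (isoT i)) mem_morphim. Qed.

Lemma phi_inj i : {in T &, injective (phi i)}.
Proof. exact/injmP/(isom_inj (isoT i)). Qed.

Lemma exists_other_index (i : 'I_k) : exists j : 'I_k, j != i.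
Proof.
pose i0 := Ordinal (ltnW k_gt1); pose i1 := Ordinal k_gt1.
by case: (eqVneq i i0) => [-> | ne_i0]; [exists i1 | exists i0; rewrite eq_sym].
Qed.

Lemma sub_factor_socle i : Ts i \subset socle G.
Proof. by rewrite -(bigdprodWY defN) sub_gen // (bigcup_sup i). Qed.

Lemma diag_inj : {in T &, injective diag}.
Proof.
move=> t s Tt Ts' eq_ts; pose i0 := Ordinal (ltnW k_gt1).
apply: (phi_inj (i := i0)) => //.
exact: bigdprod_prod_inj defN eq_ts (fun i => phi_mem i Tt) (fun i => phi_mem i Ts') i0.
Qed.

Lemma card_socle : #|socle G| = (#|T| ^ k)%N.
Proof.
rewrite -(bigdprod_card defN) (eq_bigr (fun _ => #|T|)) ?big_const_ord ?iter_muln_1 //.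
by move=> i _; rewrite (isom_card (isoT i)).
Qed.

Lemma socle_transitive :
  [primitive G, on [set: Omega] | 'P] -> T :!=: 1 ->
  [transitive socle G, on [set: Omega] | 'P].
Proof.
move=> primG ntT; have [cN | //] := prim_trans_norm primG (socle_normal G).
have /trivgP N1 := subset_trans cN (perm_faithful G).
move: card_socle; rewrite N1 cards1 -(prednK (ltnW k_gt1)) expnS => /esym/eqP.
by rewrite muln_eq1 -trivg_card1 (negbTE ntT).
Qed.

Lemma prime_dvd_card_factor p :
  [primitive G, on [set: Omega] | 'P] -> T :!=: 1 -> prime p -> p %| #|Omega| ->
  p %| #|T|.
Proof.
move=> primG ntT p_pr pOmega.
have cardOmega : #|Omega| = #|socle G : 'C_(socle G)[a | 'P]|.
  by rewrite -card_orbit (atransP (socle_transitive primG ntT)) ?inE ?cardsT.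
rewrite cardOmega in pOmega.
have := dvdn_trans pOmega (dvdn_indexg _ _).
by rewrite card_socle Euclid_dvdX // => /andP[].
Qed.

Lemma diag_conjE i t z : t \in T -> z \in T ->
  diag t ^ phi i z = \prod_(j < k) phi j (if j == i then t ^ z else t).
Proof.
move=> Tt Tz; rewrite /diag conjg_prod; apply: eq_bigr => j _.
case: eqP => [-> | /eqP ne_ji]; first by rewrite morphJ.
apply/conjg_fixP/commgP.
by apply: (centsP (bigdprod_cent defN ne_ji)); apply: phi_mem.
Qed.

(* Uniqueness of the decomposition in T_1 x ... x T_k, applied at a
   coordinate other than i, is where k >= 2 is used. *)
Lemma diag_conj_mem i t z : t \in T -> z \in T ->
  (diag t ^ phi i z \in diag @: T) = (t ^ z == t).
Proof.
move=> Tt Tz; rewrite diag_conjE //; apply/imsetP/eqP => [[s Ts' eq_s] | tz].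
  have mem_if j : phi j (if j == i then t ^ z else t) \in Ts j.
    by case: ifP => _; rewrite phi_mem ?groupJ.
  have eq_phi := bigdprod_prod_inj defN eq_s mem_if (fun j => phi_mem j Ts').
  have [j ne_ji] := exists_other_index i.
  have ts : t = s by have := eq_phi j; rewrite /= (negbTE ne_ji); apply: phi_inj.
  by have := eq_phi i; rewrite /= eqxx -ts; apply: phi_inj; rewrite ?groupJ.
by exists t => //; apply: eq_bigr => j _; rewrite tz if_same.
Qed.

Lemma diag_astab1 i t z : t \in T -> z \in T ->
  (diag t \in 'C[phi i z a | 'P]) = (t \in 'C[z]).
Proof.
move=> Tt Tz; have Dt : diag t \in 'C_(socle G)[a | 'P] by rewrite point_stab_diag imset_f.
have Nt : diag t ^ phi i z^-1 \in socle G.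
  rewrite groupJ ?(subsetP (subsetIl _ _) _ Dt) //.
  by rewrite (subsetP (sub_factor_socle i)) ?phi_mem ?groupV.
rewrite (astab1_act 'P a (phi i z)) mem_conjg -morphV //.
transitivity (diag t ^ phi i z^-1 \in 'C_(socle G)[a | 'P]).
  by rewrite [RHS]in_setI Nt.
rewrite point_stab_diag diag_conj_mem ?groupV // conjg_fix (sameP commgP cent1P).
by rewrite cent1C groupV cent1C.
Qed.

Lemma astab1_diag i z : z \in T ->
  'C_('C_(socle G)[a | 'P])[phi i z a | 'P] = diag @: 'C_T[z].
Proof.
move=> Tz; apply/setP => d; rewrite in_setI point_stab_diag.
apply/andP/imsetP => [[/imsetP[t Tt ->]] | [t /setIP[Tt czt] ->]].
  by rewrite diag_astab1 // => czt; exists t; rewrite ?in_setI ?Tt.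
by rewrite imset_f ?diag_astab1.
Qed.

Lemma index_astab1_diag i z : z \in T ->
  #|'C_(socle G)[a | 'P] : 'C_('C_(socle G)[a | 'P])[phi i z a | 'P]|
  = #|T : 'C_T[z]|.
Proof.
move=> Tz; rewrite -!divgS ?subsetIl //= astab1_diag // point_stab_diag.
rewrite !card_in_imset //; last exact: diag_inj.
by move=> t s /setIP[Tt _] /setIP[Ts' _]; apply: diag_inj.
Qed.

End DiagonalType.

Theorem lemma3p3 (Omega : finType) (G : {group {perm Omega}}) (p : nat) :
  [primitive G, on [set: Omega] | 'P] ->
  diagonal_type G ->
  prime p -> (p %| #|Omega|)%N ->
  exists a b : Omega, (p %| #|orbit 'P 'C_G[a | 'P] b|)%N.
Proof.
move=> primG [k [hT [T [Ts [phi [[k_gt1 simT nabT defN isoT] [a defD]]]]]]] p_pr pOmega.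
have ntT : T :!=: 1 by case/simpleP: simT.
have pT := prime_dvd_card_factor a k_gt1 defN isoT primG ntT p_pr pOmega.
have [x Tx px] := nonabelian_simple_class_dvd simT nabT p_pr pT.
pose i0 := Ordinal (ltnW k_gt1).
exists a, (phi i0 x a); rewrite card_orbit.
apply: dvdn_trans (index_astab1_dvd _ _ (normal_astab1 _ _ (socle_normal G))).
by rewrite (index_astab1_diag k_gt1 defN isoT defD i0 Tx).
Qed.
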